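(* Let $(\mu,u)$ be a classical structure on $A$ with spiders $\Xi_n^m$ and classical channel $C_\Xi$, and let $H:A\to A$ be a complementary endomorphism for it. Then: (i) for every normalized pure classical element $e:\mathrm I\to A$, $C_\Xi\circ H\circ e=\bot_A$; (ii) $C_\Xi\circ H\circ C_\Xi=\bot_A\circ\top_A$.
   Context: Setting. $\mathbf C$ is a strict symmetric monoidal category with monoidal unit $\mathrm I$, symmetry $\sigma$, and a dagger functor $(-)^\dagger$ (identity on objects, contravariant, involutive, strict monoidal). $\mathbf C^{pure}$ is a subcategory of $\mathbf C$ with the same objects, closed under $\otimes$ and $\dagger$, containing identities, symmetries and the maps $\eta_A$ below. Every object $A$ is self-dual: there is $\eta_A:\mathrm I\to A\otimes A$ in $\mathbf C^{pure}$ with $\epsilon_A:=\eta_A^\dagger$, $(\epsilon_A\otimes 1_A)\circ(1_A\otimes\eta_A)=1_A$ and $\sigma_{A,A}\circ\eta_A=\eta_A$. A morphism $U$ is unitary if $U^\dagger\circ U=1$ and $U\circ U^\dagger=1$. Environment structure: a family of morphisms $\top_A:A\to\mathrm I$ in $\mathbf C$ such that (E1) for all objects $A,B$ and all $f,g\in\mathbf C^{pure}(A,B)$: $f^\dagger\circ f=g^\dagger\circ g$ if and only if $\top_B\circ f=\top_B\circ g$; (E2) $\top_{A\otimes B}=\top_A\otimes\top_B$; (E3) $(1_A\otimes\top_A)\circ\eta_A=\bot_A$, where $\bot_A:=\top_A^\dagger:\mathrm I\to A$. An element $\psi:\mathrm I\to A$ is normalized if $\top_A\circ\psi=1_{\mathrm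 I}$. Classical structure on $A$: morphisms $\mu:A\otimes A\to A$ and $u:\mathrm I\to A$ in $\mathbf C^{pure}$, with $\delta:=\mu^\dagger$, such that $\mu$ is associative with unit $u$, $\mu\circ\sigma_{A,A}=\mu$, $(1_A\otimes\mu)\circ(\delta\otimes 1_A)=\delta\circ\mu$, $\mu\circ\delta=1_A$, and $\eta_A=\delta\circ u$. Spiders: $\mu_0:=u$, $\mu_1:=1_A$, $\mu_{k+1}:=\mu\circ(\mu_k\otimes 1_A)$, and $\Xi_n^m:=\mu_m^\dagger\circ\mu_n:A^{\otimes n}\to A^{\otimes m}$. A pure classical element is $e:\mathrm I\to A$ in $\mathbf C^{pure}$ with $\Xi_1^2\circ e=e\otimes e$. The classical channel is $C_\Xi:=(1_A\otimes\top_A)\circ\Xi_1^2:A\to A$. Complementary endomorphism: $H:A\to A$ in $\mathbf C^{pure}$ with $(H\otimes 1_A)\circ\eta_A=(1_A\otimes H)\circ\eta_A$, $H^\dagger=H$, $H$ unitary, and $\Xi_2^1\circ(H\otimes H)\circ\Xi_1^2=\Xi_0^1\circ\Xi_1^0$ (i.e. $\mu\circ(H\otimes H)\circ\delta=u\circ u^\dagger$). *)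

(* Morphisms are a single type with dom/cod maps (an
   "arrows-only" presentation), so that strictness of the monoidal
   structure ((A⊗B)⊗C = A⊗(B⊗C), I⊗A = A = A⊗I, and the same for
   morphisms) can be stated as plain equalities without casts.
   [comp g f] is g ∘ f; it is only meaningful when cod f = dom g. *)

Set Implicit Arguments.
Unset Strict Implicit.

Record DSMC := {
  Ob : Type;
  Mor : Type;
  dom : Mor -> Ob;
  cod : Mor -> Ob;
  idm : Ob -> Mor;
  comp : Mor -> Mor -> Mor;
  Iob : Ob;
  ten : Ob -> Ob -> Ob;
  tenm : Mor -> Mor -> Mor;
  sym : Ob -> Ob -> Mor;
  dag : Mor -> Mor;
  dom_id : forall A, dom (idm A) = A;
  cod_id : forall A, cod (idm A) = A;
  dom_comp : forall f g, cod f = dom g -> dom (comp g f) = dom f;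
  cod_comp : forall f g, cod f = dom g -> cod (comp g f) = cod g;
  comp_idl : forall f, comp (idm (cod f)) f = f;
  comp_idr : forall f, comp f (idm (dom f)) = f;
  comp_assoc : forall f g h, cod f = dom g -> cod g = dom h ->
      comp h (comp g f) = comp (comp h g) f;
  ten_assoc : forall A B C, ten (ten A B) C = ten A (ten B C);
  ten_unitl : forall A, ten Iob A = A;
  ten_unitr : forall A, ten A Iob = A;
  dom_tenm : forall f g, dom (tenm f g) = ten (dom f) (dom g);
  cod_tenm : forall f g, cod (tenm f g) = ten (cod f) (cod g);
  tenm_id : forall A B, tenm (idm A) (idm B) = idm (ten A B);
  tenm_comp : forall f f' g g', cod f = dom f' -> cod g = dom g' ->
      tenm (comp f' f) (comp g' g) = comp (tenm f' g') (tenm f g);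
  tenm_assoc : forall f g h, tenm (tenm f g) h = tenm f (tenm g h);
  tenm_unitl : forall f, tenm (idm Iob) f = f;
  tenm_unitr : forall f, tenm f (idm Iob) = f;
  dom_sym : forall A B, dom (sym A B) = ten A B;
  cod_sym : forall A B, cod (sym A B) = ten B A;
  sym_nat : forall f g,
      comp (sym (cod f) (cod g)) (tenm f g) = comp (tenm g f) (sym (dom f) (dom g));
  sym_inv : forall A B, comp (sym B A) (sym A B) = idm (ten A B);
  sym_hex : forall A B C,
      sym A (ten B C) = comp (tenm (idm B) (sym A C)) (tenm (sym A B) (idm C));
  dom_dag : forall f, dom (dag f) = cod f;
  cod_dag : forall f, cod (dag f) = dom f;
  dag_id : forall A, dag (idm A) = idm A;
  dag_comp : forall f g, cod f = dom g -> dag (comp g f) = comp (dag f) (dag g);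
  dag_dag : forall f, dag (dag f) = f;
  dag_tenm : forall f g, dag (tenm f g) = tenm (dag f) (dag g)
}.

Arguments Iob : clear implicits.

Section Defs.
Variable C : DSMC.
Notation Ob := (Ob C).
Notation Mor := (Mor C).

Definition pure_subcat (pure : Mor -> Prop) (eta : Ob -> Mor) : Prop :=
  (forall A, pure (idm A)) /\
  (forall f g, cod f = dom g -> pure f -> pure g -> pure (comp g f)) /\
  (forall f g, pure f -> pure g -> pure (tenm f g)) /\
  (forall f, pure f -> pure (dag f)) /\
  (forall A B, pure (sym A B)) /\
  (forall A, pure (eta A)).

Definition eps (eta : Ob -> Mor) (A : Ob) : Mor := dag (eta A).

Definition self_dual (eta : Ob -> Mor) : Prop :=
  forall A, dom (eta A) = Iob C /\ cod (eta A) = ten A A /\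
    comp (tenm (eps eta A) (idm A)) (tenm (idm A) (eta A)) = idm A /\
    comp (sym A A) (eta A) = eta A.

Definition bot (top : Ob -> Mor) (A : Ob) : Mor := dag (top A).

Definition environment (pure : Mor -> Prop) (eta top : Ob -> Mor) : Prop :=
  (forall A, dom (top A) = A /\ cod (top A) = Iob C) /\
  (* (E1) *)
  (forall A B f g, pure f -> pure g ->
     dom f = A -> cod f = B -> dom g = A -> cod g = B ->
     (comp (dag f) f = comp (dag g) g <-> comp (top B) f = comp (top B) g)) /\
  (* (E2) *)
  (forall A B, top (ten A B) = tenm (top A) (top B)) /\
  (* (E3) *)
  (forall A, comp (tenm (idm A) (top A)) (eta A) = bot top A).

Definition normalized (top : Ob -> Mor) (A : Ob) (psi : Mor) : Prop :=
  comp (top A) psi = idm (Iob C).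

Definition classical_structure (pure : Mor -> Prop) (eta : Ob -> Mor)
    (A : Ob) (mu u : Mor) : Prop :=
  pure mu /\ pure u /\
  dom mu = ten A A /\ cod mu = A /\ dom u = Iob C /\ cod u = A /\
  comp mu (tenm mu (idm A)) = comp mu (tenm (idm A) mu) /\
  comp mu (tenm u (idm A)) = idm A /\
  comp mu (tenm (idm A) u) = idm A /\
  comp mu (sym A A) = mu /\
  comp (tenm (idm A) mu) (tenm (dag mu) (idm A)) = comp (dag mu) mu /\
  comp mu (dag mu) = idm A /\
  eta A = comp (dag mu) u.

Fixpoint smu (A : Ob) (mu u : Mor) (n : nat) : Mor :=
  match n with
  | O => u
  | S O => idm A
  | S k => comp mu (tenm (smu A mu u k) (idm A))
  end.

Definition Xi (A : Ob) (mu u : Mor) (n m : nat) : Mor :=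
  comp (dag (smu A mu u m)) (smu A mu u n).

Definition chan (top : Ob -> Mor) (A : Ob) (mu u : Mor) : Mor :=
  comp (tenm (idm A) (top A)) (Xi A mu u 1 2).

Definition pure_classical_element (pure : Mor -> Prop) (A : Ob) (mu u e : Mor) : Prop :=
  pure e /\ dom e = Iob C /\ cod e = A /\
  comp (Xi A mu u 1 2) e = tenm e e.

Definition unitary (U : Mor) : Prop :=
  comp (dag U) U = idm (dom U) /\ comp U (dag U) = idm (cod U).

Definition complementary (pure : Mor -> Prop) (eta : Ob -> Mor)
    (A : Ob) (mu u H : Mor) : Prop :=
  pure H /\ dom H = A /\ cod H = A /\
  comp (tenm H (idm A)) (eta A) = comp (tenm (idm A) H) (eta A) /\
  dag H = H /\ unitary H /\
  comp (Xi A mu u 2 1) (comp (tenm H H) (Xi A mu u 1 2))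
    = comp (Xi A mu u 0 1) (Xi A mu u 1 0).

End Defs.

From Stdlib Require Import Setoid.

(* Write δ = μ† and t = ⊤_A.  The endomorphism CNOT = (μ ⊗ 1)(1 ⊗ H ⊗ 1)(1 ⊗ δ) of
   A ⊗ A is pure, and complementarity μ (H ⊗ H) δ = u u† makes it an isometry;
   by (E1) it therefore leaves t ⊗ t invariant.  Bending the first input of
   (t ⊗ t) ∘ CNOT with the cup δ u yields C_Ξ ∘ H ∘ C_Ξ, whereas bending t ⊗ t
   itself yields ⊥ ∘ t by (E3): this is (ii).  A normalized pure classical
   element is fixed by C_Ξ, so (i) follows from (ii):
   C_Ξ H e = C_Ξ H C_Ξ e = ⊥ t e = ⊥. *)

Section StrictMonoidal.
Context {C : DSMC}.
Implicit Types (f g : Mor C) (X Y : Ob C).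

Lemma comp_idl_cod f Y : cod f = Y -> comp (idm Y) f = f.
Proof. intros <-; apply comp_idl. Qed.

Lemma comp_idr_dom f X : dom f = X -> comp f (idm X) = f.
Proof. intros <-; apply comp_idr. Qed.

Lemma tenm_interchange_l f g X Y : dom f = X -> cod g = Y ->
  comp (tenm f (idm Y)) (tenm (idm X) g) = tenm f g.
Proof.
  intros <- <-. rewrite <- tenm_comp by (rewrite ?dom_id, ?cod_id; reflexivity).
  rewrite comp_idr, comp_idl. reflexivity.
Qed.

Lemma tenm_interchange_r f g X Y : cod f = Y -> dom g = X ->
  comp (tenm (idm Y) g) (tenm f (idm X)) = tenm f g.
Proof.
  intros <- <-. rewrite <- tenm_comp by (rewrite ?dom_id, ?cod_id; reflexivity).
  rewrite comp_idr, comp_idl. reflexivity.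
Qed.

Lemma tenm_id_comp f g X : cod g = dom f ->
  tenm (idm X) (comp f g) = comp (tenm (idm X) f) (tenm (idm X) g).
Proof.
  intros h. rewrite <- tenm_comp by (rewrite ?dom_id, ?cod_id; auto).
  rewrite (comp_idr_dom (idm X)) by apply dom_id. reflexivity.
Qed.

Lemma tenm_comp_id f g X : cod g = dom f ->
  tenm (comp f g) (idm X) = comp (tenm f (idm X)) (tenm g (idm X)).
Proof.
  intros h. rewrite <- tenm_comp by (rewrite ?dom_id, ?cod_id; auto).
  rewrite (comp_idr_dom (idm X)) by apply dom_id. reflexivity.
Qed.

End StrictMonoidal.

(* Side conditions [dom f = X], [cod f = dom g] of the arrows-only presentation,
   solved from the typing hypotheses in context. *)
Ltac typecheck :=
  repeat first
    [ rewrite dom_tenm | rewrite cod_tenm | rewrite dom_id | rewrite cod_id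
    | rewrite dom_dag | rewrite cod_dag | rewrite dom_sym | rewrite cod_sym
    | rewrite dom_comp by typecheck | rewrite cod_comp by typecheck
    | match goal with
      | h : dom ?f = _ |- context [dom ?f] => rewrite h
      | h : cod ?f = _ |- context [cod ?f] => rewrite h
      | h : forall x, dom (?f x) = _ |- context [dom (?f _)] => rewrite h
      | h : forall x, cod (?f x) = _ |- context [cod (?f _)] => rewrite h
      end ];
  repeat first [rewrite ten_assoc | rewrite ten_unitl | rewrite ten_unitr];
  reflexivity.

Lemma environment_top_isometry {C : DSMC} {pure : Mor C -> Prop}
    {eta top : Ob C -> Mor C} {B : Ob C} {f : Mor C} :
  pure_subcat pure eta -> environment pure eta top ->
  pure f -> dom f = B -> cod f = B ->
  comp (dag f) f = idm B -> comp (top B) f = top B.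
Proof.
  intros [Pid _] [Htop [E1 _]] Pf Hdf Hcf Hiso.
  assert (Hdt : dom (top B) = B) by apply Htop.
  rewrite <- (comp_idr_dom (top B) B) at 2 by exact Hdt.
  apply (E1 B B); auto; try typecheck.
  rewrite Hiso, dag_id. symmetry; apply comp_idl_cod; typecheck.
Qed.

Section ClassicalStructure.
Context {C : DSMC}.
Context {A : Ob C} {mu u : Mor C}.
Hypothesis mu_dom : dom mu = ten A A.
Hypothesis mu_cod : cod mu = A.
Hypothesis u_dom : dom u = Iob C.
Hypothesis u_cod : cod u = A.
Hypothesis mu_assoc : comp mu (tenm mu (idm A)) = comp mu (tenm (idm A) mu).
Hypothesis mu_unitl : comp mu (tenm u (idm A)) = idm A.
Hypothesis mu_unitr : comp mu (tenm (idm A) u) = idm A.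
Hypothesis frobenius : comp (tenm (idm A) mu) (tenm (dag mu) (idm A)) = comp (dag mu) mu.

Lemma Xi_1_2 : Xi A mu u 1 2 = dag mu.
Proof.
  unfold Xi; simpl. rewrite tenm_id, (comp_idr_dom mu) by typecheck.
  apply comp_idr_dom; typecheck.
Qed.

Lemma Xi_2_1 : Xi A mu u 2 1 = mu.
Proof.
  unfold Xi; simpl. rewrite tenm_id, (comp_idr_dom mu), dag_id by typecheck.
  apply comp_idl_cod; typecheck.
Qed.

Lemma Xi_0_1 : Xi A mu u 0 1 = u.
Proof. unfold Xi; simpl. rewrite dag_id. apply comp_idl_cod; typecheck. Qed.

Lemma Xi_1_0 : Xi A mu u 1 0 = dag u.
Proof. unfold Xi; simpl. apply comp_idr_dom; typecheck. Qed.

Lemma frobenius_dag :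
  comp (tenm mu (idm A)) (tenm (idm A) (dag mu)) = comp (dag mu) mu.
Proof.
  pose proof (f_equal (@dag C) frobenius) as h.
  rewrite !dag_comp, !dag_tenm, !dag_id, !dag_dag in h by typecheck. exact h.
Qed.

Lemma counitl : comp (tenm (dag u) (idm A)) (dag mu) = idm A.
Proof.
  pose proof (f_equal (@dag C) mu_unitl) as h.
  rewrite !dag_comp, !dag_tenm, !dag_id in h by typecheck. exact h.
Qed.

Lemma counitr : comp (tenm (idm A) (dag u)) (dag mu) = idm A.
Proof.
  pose proof (f_equal (@dag C) mu_unitr) as h.
  rewrite !dag_comp, !dag_tenm, !dag_id in h by typecheck. exact h.
Qed.

Lemma cap_snake_l :
  comp (tenm (comp (dag u) mu) (idm A)) (tenm (idm A) (dag mu)) = mu.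
Proof.
  rewrite tenm_comp_id by typecheck. rewrite <- comp_assoc by typecheck.
  rewrite frobenius_dag, comp_assoc, counitl by typecheck.
  apply comp_idl_cod; typecheck.
Qed.

Lemma cap_snake_r :
  comp (tenm (idm A) (comp (dag u) mu)) (tenm (dag mu) (idm A)) = mu.
Proof.
  rewrite tenm_id_comp by typecheck. rewrite <- comp_assoc by typecheck.
  rewrite frobenius, comp_assoc, counitr by typecheck.
  apply comp_idl_cod; typecheck.
Qed.

Lemma cup_merge_snake : comp (tenm (idm A) mu) (tenm (comp (dag mu) u) (idm A)) = dag mu.
Proof.
  rewrite tenm_comp_id by typecheck. rewrite comp_assoc, frobenius by typecheck.
  rewrite <- comp_assoc, mu_unitl by typecheck. apply comp_idr_dom; typecheck.
Qed.


Lemma chan_pure_classical_element {pure : Mor C -> Prop} {top : Ob C -> Mor C} {e : Mor C} :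
  dom (top A) = A -> cod (top A) = Iob C ->
  pure_classical_element pure A mu u e -> normalized top A e ->
  comp (chan top A mu u) e = e.
Proof.
  intros t_dom t_cod (_ & e_dom & e_cod & e_copy) e_norm.
  unfold chan. rewrite Xi_1_2 in *.
  rewrite <- comp_assoc, e_copy, <- tenm_comp by typecheck.
  rewrite e_norm, (comp_idl_cod e), tenm_unitr by typecheck. reflexivity.
Qed.

Section Complementarity.
Context {H : Mor C}.
Hypothesis H_dom : dom H = A.
Hypothesis H_cod : cod H = A.
Hypothesis H_dag : dag H = H.
Hypothesis H_transpose :
  comp (tenm H (idm A)) (comp (dag mu) u) = comp (tenm (idm A) H) (comp (dag mu) u).
Hypothesis complementarity : comp mu (comp (tenm H H) (dag mu)) = comp u (dag u).

Lemma cap_H_transpose :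
  comp (comp (dag u) mu) (tenm H (idm A)) = comp (comp (dag u) mu) (tenm (idm A) H).
Proof.
  pose proof (f_equal (@dag C) H_transpose) as h.
  rewrite !dag_comp, !dag_tenm, !dag_id, !dag_dag, H_dag in h by typecheck. exact h.
Qed.

Lemma H_mu_bend : comp H (comp mu (tenm (idm A) H)) =
  comp (tenm (idm A) (comp (dag u) mu)) (tenm (comp (tenm H H) (dag mu)) (idm A)).
Proof.
  assert (mu_bend : comp mu (tenm (idm A) H)
      = comp (tenm (idm A) (comp (dag u) mu)) (tenm (dag mu) H)).
  { rewrite <- cap_snake_r at 1.
    rewrite <- comp_assoc by typecheck. f_equal. apply tenm_interchange_l; typecheck. }
  assert (H_slide : comp H (tenm (idm A) (comp (dag u) mu))
      = comp (tenm (idm A) (comp (dag u) mu)) (tenm (tenm H (idm A)) (idm A))).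
  { transitivity (tenm H (comp (dag u) mu)).
    { rewrite <- (tenm_interchange_l H (comp (dag u) mu) A (Iob C)) by typecheck.
      rewrite tenm_unitr. reflexivity. }
    rewrite tenm_assoc, tenm_id. symmetry; apply tenm_interchange_r; typecheck. }
  rewrite mu_bend, comp_assoc, H_slide by typecheck.
  rewrite <- comp_assoc, <- tenm_comp, (comp_idl_cod H) by typecheck.
  rewrite <- (tenm_interchange_r (comp (tenm H (idm A)) (dag mu)) H A (ten A A)) by typecheck.
  rewrite <- tenm_id, tenm_assoc, comp_assoc, <- tenm_id_comp by typecheck.
  rewrite <- cap_H_transpose, tenm_id_comp, <- tenm_assoc by typecheck.
  rewrite <- comp_assoc by typecheck. f_equal.
  rewrite <- tenm_comp_id by typecheck. f_equal. rewrite comp_assoc by typecheck. f_equal.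
  apply tenm_interchange_r; typecheck.
Qed.

Lemma complementary_zigzag :
  comp mu (comp (tenm H (idm A)) (comp (tenm mu (idm A))
    (tenm (idm A) (comp (tenm H (idm A)) (dag mu))))) = tenm (dag u) (idm A).
Proof.
  rewrite tenm_id_comp by typecheck. rewrite <- tenm_assoc.
  replace (comp (tenm H (idm A)) (comp (tenm mu (idm A))
             (comp (tenm (tenm (idm A) H) (idm A)) (tenm (idm A) (dag mu)))))
    with (comp (tenm (comp H (comp mu (tenm (idm A) H))) (idm A)) (tenm (idm A) (dag mu)))
    by (rewrite !tenm_comp_id by typecheck; rewrite !comp_assoc by typecheck; reflexivity).
  rewrite H_mu_bend, tenm_comp_id by typecheck.
  rewrite <- (comp_assoc (f:=tenm (idm A) (dag mu))) by typecheck.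
  rewrite (tenm_assoc (comp (tenm H H) (dag mu))), tenm_id.
  rewrite (tenm_interchange_l (comp (tenm H H) (dag mu)) (dag mu) A (ten A A)) by typecheck.
  rewrite <- (tenm_interchange_r (comp (tenm H H) (dag mu)) (dag mu) A (ten A A)) by typecheck.
  rewrite (comp_assoc (h:=tenm (tenm (idm A) (comp (dag u) mu)) (idm A))) by typecheck.
  rewrite tenm_assoc, <- tenm_id, tenm_assoc, <- tenm_id_comp by typecheck.
  rewrite cap_snake_l.
  rewrite comp_assoc, <- mu_assoc, <- comp_assoc, <- tenm_comp_id by typecheck.
  rewrite complementarity, tenm_comp_id, comp_assoc, mu_unitl by typecheck.
  apply comp_idl_cod; typecheck.
Qed.


Definition cnot : Mor C :=
  comp (tenm mu (idm A)) (comp (tenm (tenm (idm A) H) (idm A)) (tenm (idm A) (dag mu))).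

Lemma cnot_dom : dom cnot = ten A A.
Proof. unfold cnot; typecheck. Qed.

Lemma cnot_cod : cod cnot = ten A A.
Proof. unfold cnot; typecheck. Qed.

Lemma cnot_isometry : comp (dag cnot) cnot = idm (ten A A).
Proof.
  assert (frobenius_r : comp (tenm (dag mu) (idm A)) (tenm mu (idm A))
      = comp (tenm (idm A) (tenm mu (idm A))) (tenm (dag mu) (idm (ten A A)))).
  { rewrite <- tenm_comp_id, <- frobenius, tenm_comp_id by typecheck.
    rewrite !tenm_assoc, tenm_id. reflexivity. }
  assert (split_commute : comp (tenm (dag mu) (idm (ten A A)))
        (comp (tenm (tenm (idm A) H) (idm A)) (tenm (idm A) (dag mu)))
      = comp (tenm (idm A) (tenm (idm A) (tenm H (idm A))))
        (comp (tenm (idm A) (tenm (idm A) (dag mu))) (tenm (dag mu) (idm A)))).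
  { rewrite tenm_assoc, <- tenm_id_comp by typecheck.
    rewrite (tenm_interchange_l (dag mu) (comp (tenm H (idm A)) (dag mu)) A (ten A A))
      by typecheck.
    rewrite <- (tenm_interchange_r (dag mu) (comp (tenm H (idm A)) (dag mu)) A (ten A A))
      by typecheck.
    rewrite <- tenm_id, tenm_assoc, !tenm_id_comp, comp_assoc by typecheck.
    reflexivity. }
  unfold cnot. rewrite !dag_comp, !dag_tenm, !dag_id, H_dag, dag_dag by typecheck.
  rewrite <- !comp_assoc by typecheck.
  rewrite (comp_assoc (g:=tenm mu (idm A)) (h:=tenm (dag mu) (idm A))), frobenius_r
    by typecheck.
  rewrite <- (comp_assoc (h:=tenm (idm A) (tenm mu (idm A)))), split_commute
    by typecheck.
  transitivity (comp (tenm (idm A) (comp mu (comp (tenm H (idm A))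
      (comp (tenm mu (idm A)) (tenm (idm A) (comp (tenm H (idm A)) (dag mu)))))))
      (tenm (dag mu) (idm A))).
  { rewrite !tenm_id_comp, tenm_assoc by typecheck.
    rewrite <- !comp_assoc by typecheck. reflexivity. }
  rewrite complementary_zigzag, <- tenm_assoc, <- tenm_comp_id, counitr by typecheck.
  apply tenm_id.
Qed.


Lemma cnot_bend (t : Mor C) : dom t = A -> cod t = Iob C ->
  comp (tenm (idm A) (comp (tenm t t) cnot)) (tenm (comp (dag mu) u) (idm A))
  = comp (tenm (comp (comp (tenm (idm A) t) (dag mu)) H) t) (dag mu).
Proof.
  intros t_dom t_cod.
  set (eta := comp (dag mu) u).
  assert (eta_dom : dom eta = Iob C) by (unfold eta; typecheck).
  assert (eta_cod : cod eta = ten A A) by (unfold eta; typecheck).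
  assert (H_slide : comp (tenm (idm (ten A A)) H) (tenm eta (idm A))
      = comp (tenm eta (idm A)) H).
  { rewrite (tenm_interchange_r eta H A (ten A A)) by typecheck.
    rewrite <- (tenm_interchange_l eta H (Iob C) A) by typecheck.
    rewrite tenm_unitl. reflexivity. }
  assert (copy_slide : comp (tenm (idm A) (tenm (idm A) (dag mu))) (tenm eta (idm A))
      = comp (tenm (tenm eta (idm A)) (idm A)) (dag mu)).
  { rewrite <- tenm_assoc, tenm_id.
    rewrite (tenm_interchange_r eta (dag mu) A (ten A A)) by typecheck.
    rewrite <- (tenm_interchange_l eta (dag mu) (Iob C) (ten A A)) by typecheck.
    rewrite tenm_unitl, <- tenm_id, tenm_assoc. reflexivity. }
  unfold cnot. rewrite !tenm_id_comp by typecheck. rewrite <- !comp_assoc by typecheck.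
  rewrite copy_slide, <- !tenm_assoc, tenm_id.
  replace (comp (tenm (tenm (idm A) mu) (idm A)) (comp (tenm (tenm (idm (ten A A)) H) (idm A))
             (comp (tenm (tenm eta (idm A)) (idm A)) (dag mu))))
    with (comp (tenm (comp (tenm (idm A) mu)
             (comp (tenm (idm (ten A A)) H) (tenm eta (idm A)))) (idm A)) (dag mu))
    by (rewrite !tenm_comp_id by typecheck; rewrite !comp_assoc by typecheck; reflexivity).
  rewrite H_slide, (comp_assoc (h:=tenm (idm A) mu)) by typecheck.
  unfold eta. rewrite cup_merge_snake.
  rewrite comp_assoc, <- tenm_comp, (comp_idr_dom t) by typecheck.
  rewrite comp_assoc by typecheck. reflexivity.
Qed.

Lemma cnot_pure {pure : Mor C -> Prop} {eta : Ob C -> Mor C} :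
  pure_subcat pure eta -> pure mu -> pure H -> pure cnot.
Proof.
  intros [Pid [Pcomp [Pten [Pdag _]]]] Pmu PH. unfold cnot.
  repeat first [apply Pcomp; [typecheck | |] | apply Pten | apply Pdag | apply Pid
               | assumption].
Qed.

Lemma top_cnot {pure : Mor C -> Prop} {eta top : Ob C -> Mor C} :
  pure_subcat pure eta -> environment pure eta top -> pure mu -> pure H ->
  comp (tenm (top A) (top A)) cnot = tenm (top A) (top A).
Proof.
  intros subcat env Pmu PH.
  assert (top_ten : top (ten A A) = tenm (top A) (top A)) by apply env.
  rewrite <- top_ten.
  apply (environment_top_isometry subcat env (cnot_pure subcat Pmu PH)
           cnot_dom cnot_cod cnot_isometry).
Qed.


Lemma chan_H_chan {pure : Mor C -> Prop} {eta top : Ob C -> Mor C} :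
  pure_subcat pure eta -> environment pure eta top -> pure mu -> pure H ->
  eta A = comp (dag mu) u ->
  comp (chan top A mu u) (comp H (chan top A mu u)) = comp (bot top A) (top A).
Proof.
  intros subcat env Pmu PH eta_def.
  pose proof (top_cnot subcat env Pmu PH) as top_cnot_A.
  destruct env as (top_type & _ & _ & top_eta).
  assert (t_dom : dom (top A) = A) by apply top_type.
  assert (t_cod : cod (top A) = Iob C) by apply top_type.
  specialize (top_eta A). rewrite eta_def in top_eta.
  unfold chan, bot in *. rewrite Xi_1_2.
  set (t := top A) in *.
  set (C0 := comp (tenm (idm A) t) (dag mu)).
  assert (C0_dom : dom C0 = A) by (unfold C0; typecheck).
  assert (C0_cod : cod C0 = A) by (unfold C0; typecheck).
  assert (chan_tensor : comp C0 (comp H C0) = comp (tenm (comp C0 H) t) (dag mu)).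
  { rewrite <- (tenm_interchange_l (comp C0 H) t A (Iob C)), tenm_unitr by typecheck.
    unfold C0 at 2. rewrite !comp_assoc by typecheck. reflexivity. }
  rewrite chan_tensor. unfold C0. rewrite <- cnot_bend, top_cnot_A by typecheck.
  transitivity (tenm (comp (tenm (idm A) t) (comp (dag mu) u)) (comp t (idm A))).
  { rewrite tenm_comp, tenm_assoc by typecheck. reflexivity. }
  rewrite top_eta, (comp_idr_dom t) by typecheck.
  rewrite <- (tenm_interchange_l (dag t) t (Iob C) (Iob C)), tenm_unitr, tenm_unitl
    by typecheck.
  reflexivity.
Qed.

End Complementarity.

End ClassicalStructure.

Theorem mainTheorem2 (C : DSMC) (pure : Mor C -> Prop) (eta top : Ob C -> Mor C)
    (A : Ob C) (mu u H : Mor C) :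
  pure_subcat pure eta ->
  self_dual eta ->
  environment pure eta top ->
  classical_structure pure eta A mu u ->
  complementary pure eta A mu u H ->
  (forall e : Mor C, pure_classical_element pure A mu u e -> normalized top A e ->
     comp (chan top A mu u) (comp H e) = bot top A) /\
  comp (chan top A mu u) (comp H (chan top A mu u)) = comp (bot top A) (top A).
Proof.
  intros subcat _ env
    (Pmu & _ & mu_dom & mu_cod & u_dom & u_cod & mu_assoc & mu_unitl & mu_unitr & _
     & frobenius & _ & eta_def)
    (PH & H_dom & H_cod & H_transpose & H_dag & _ & complementarity).
  rewrite eta_def in H_transpose.
  rewrite Xi_2_1, Xi_1_2, Xi_0_1, Xi_1_0 in complementarity by assumption.
  assert (t_dom : dom (top A) = A) by apply env.
  assert (t_cod : cod (top A) = Iob C) by apply env.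
  assert (chan_dom : dom (chan top A mu u) = A) by (unfold chan; rewrite Xi_1_2; typecheck).
  assert (chan_cod : cod (chan top A mu u) = A) by (unfold chan; rewrite Xi_1_2; typecheck).
  assert (part_ii := chan_H_chan mu_dom mu_cod u_dom u_cod mu_assoc mu_unitl mu_unitr
    frobenius H_dom H_cod H_dag H_transpose complementarity subcat env Pmu PH eta_def).
  split; [intros e e_class e_norm | exact part_ii].
  pose proof e_class as (_ & e_dom & e_cod & _).
  rewrite <- (chan_pure_classical_element mu_dom mu_cod t_dom t_cod e_class e_norm) at 1.
  rewrite (comp_assoc (h:=H)), comp_assoc, part_ii by typecheck.
  unfold bot. rewrite <- comp_assoc, e_norm by typecheck.
  apply comp_idr_dom; typecheck.
Qed.
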